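(* Let $n\geqslant m\geqslant2$. Then $\mathrm{SR}(n+2,m)=\mathrm{SR}(n,m)+\binom{m+2}{2}$. Furthermore, if $n+m$ is even, then $\mathrm{DR}(n+2,m)=\mathrm{DR}(n,m)+\binom{m+2}{2}$.
   Context: Let $p,q$ be distinct primes and $n,m$ positive integers. In $C_{p^nq^m}$ let $C_{p^aq^x}$ be the unique subgroup of order $p^aq^x$, and write $(a,x;b,y)$ for the pair of subgroups $(C_{p^aq^x},C_{p^bq^y})$ with $0\leqslant a\leqslant b\leqslant n$, $0\leqslant x\leqslant y\leqslant m$, $(a,x)\neq(b,y)$. Its midpoint is $(a+x+b+y)/2$, and $R_M$ (depending on $n,m$) is the set of all such pairs with midpoint $M$. The simple rainbow number $\mathrm{SR}(n,m)$ is $|R_{(n+m)/2}|$ if $n+m$ is odd, and $|R_{(n+m-1)/2}|$ (which equals $|R_{(n+m+1)/2}|$) if $n+m$ is even. For $n,m\geqslant2$ with $n+m$ even, the double rainbow number is $\mathrm{DR}(n,m)=|R_{(n+m)/2}|$. *)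

From mathcomp Require Import all_boot.
Set Implicit Arguments. Unset Strict Implicit. Unset Printing Implicit Defensive.

(* A pair of subgroups (C_{p^a q^x}, C_{p^b q^y}) of C_{p^n q^m} is encoded by
   its exponent quadruple (a, x, b, y).  The subgroup lattice of C_{p^n q^m}
   is in bijection with exponent pairs (a,x), 0<=a<=n, 0<=x<=m. *)
Definition is_pair (n m : nat) (t : nat * nat * nat * nat) : bool :=
  let: (a, x, b, y) := t in
  [&& a <= b, b <= n, x <= y, y <= m & (a, x) != (b, y)].

Definition quads (n m : nat) : seq (nat * nat * nat * nat) :=
  flatten [seq flatten [seq flatten [seq [seq (a, x, b, y) | y <- iota 0 m.+1]
                                   | b <- iota 0 n.+1]
                 | x <- iota 0 m.+1]
          | a <- iota 0 n.+1].

(* |R_M| where M = s/2, i.e. s = 2M = a + x + b + y (twice the midpoint). *)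
Definition cardR (n m s : nat) : nat :=
  count (fun t => is_pair n m t &&
           (let: (a, x, b, y) := t in a + x + b + y == s)) (quads n m).

Definition SR (n m : nat) : nat :=
  if odd (n + m) then cardR n m (n + m) else cardR n m (n + m - 1).

(* double rainbow number (meaningful for n+m even, n,m >= 2) : M = (n+m)/2 *)
Definition DR (n m : nat) : nat := cardR n m (n + m).

(* Sort the pairs (a, x, b, y) of R_M by their q-exponents (x, y): for fixed
   x <= y the fibre consists of the 0 <= a <= b <= n with a + b = t and
   (a, x) <> (b, y), where t = 2M - x - y.  Replacing (n, M) by (n + 2, M + 1) replaces t by t + 2, and
   the shift (a, b) |-> (a + 1, b + 1) maps the old fibre onto the new pairs
   with 0 < a and b < n + 2.  When x + y <= 2M + 1 and M <= n, exactly one new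
   pair is left over: (0, t + 2) if t <= n, and (t - n, n + 2) otherwise.
   Summing over the C(m + 2, 2) pairs x <= y <= m gives the increment, and
   both midpoints used by SR and DR satisfy the bounds once m <= n. *)

From mathcomp Require Import all_boot zify.

Set Implicit Arguments.
Unset Strict Implicit.
Unset Printing Implicit Defensive.

Section BigNatSquare.

Variables (R : Type) (idx : R) (op : Monoid.com_law idx).

Lemma big_nat_square_border n (f : nat -> nat -> R) :
  \big[op/idx]_(0 <= a < n.+2) \big[op/idx]_(0 <= b < n.+2) f a b =
  op (op (\big[op/idx]_(0 <= b < n.+2) f 0 b)
         (\big[op/idx]_(0 <= a < n.+1) op (f a.+1 0) (f a.+1 n.+1)))
     (\big[op/idx]_(0 <= a < n.+1) \big[op/idx]_(0 <= b < n) f a.+1 b.+1).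
Proof.
rewrite big_nat_recl // -Monoid.mulmA -[X in _ = op _ X]big_split.
congr (op _ _); apply: eq_bigr => a _; rewrite big_nat_recl // big_nat_recr //=.
by rewrite -Monoid.mulmA [X in _ = op _ X]Monoid.mulmC.
Qed.

End BigNatSquare.

Lemma sum_nat_indicator1 K c (P : pred nat) :
  (forall b, b != c -> P b = false) -> \sum_(0 <= b < K) P b = (c < K) && P c.
Proof.
move=> Pc; have [cK|Kc] /= := ltnP c K.
  rewrite (bigD1_seq c) ?mem_index_iota ?iota_uniq //= big1 ?addn0 //.
  by move=> b /Pc ->.
rewrite big1_seq // => b; rewrite mem_index_iota => /andP[_ bK].
by rewrite Pc //; apply: contraTneq bK => ->; rewrite -leqNgt.
Qed.

Lemma sum_leq_pairs k :
  \sum_(0 <= x < k) \sum_(0 <= y < k) (x <= y) = 'C(k.+1, 2).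
Proof.
rewrite exchange_big /= -bin2_sum big_nat_recl //= add0n.
apply: eq_big_nat => y /andP[_ yk].
rewrite (@big_cat_nat _ _ _ y.+1 0 k) // /=.
rewrite (eq_big_nat _ _ (F2 := fun=> 1)) => [|x /andP[_]]; last by move/ltnSE ->.
rewrite sum_nat_const_nat muln1 subn0 big1_seq ?addn0 // => x /andP[_].
by rewrite mem_index_iota => /andP[yx _]; rewrite leqNgt yx.
Qed.

Definition in_R N m s a x b y : bool :=
  is_pair N m (a, x, b, y) && (a + x + b + y == s).

Definition fiberR N m s x y : nat :=
  \sum_(0 <= a < N.+1) \sum_(0 <= b < N.+1) in_R N m s a x b y.

Lemma cardR_fibers N m s :
  cardR N m s = \sum_(0 <= x < m.+1) \sum_(0 <= y < m.+1) fiberR N m s x y.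
Proof.
have -> : cardR N m s = \sum_(0 <= a < N.+1) \sum_(0 <= x < m.+1)
    \sum_(0 <= b < N.+1) \sum_(0 <= y < m.+1) in_R N m s a x b y.
  rewrite /cardR /quads /index_iota !subn0 count_flatten sumnE !big_map.
  apply: eq_bigr => a _; rewrite count_flatten sumnE !big_map.
  apply: eq_bigr => x _; rewrite count_flatten sumnE !big_map.
  apply: eq_bigr => b _; rewrite count_map -sum1_count big_mkcond.
  by apply: eq_bigr.
rewrite exchange_big; apply: eq_bigr => x _.
rewrite /fiberR [RHS]exchange_big; apply: eq_bigr => a _.
exact: exchange_big.
Qed.

Lemma fiberR_step N m s x y : x <= m -> y <= m -> x + y <= s.+1 -> s <= 2 * N ->
  fiberR N.+2 m s.+2 x y = fiberR N m s x y + (x <= y).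
Proof.
move=> xm ym xys sN.
rewrite [fiberR N.+2 _ _ _ _]/fiberR (big_nat_square_border _ N.+1) /=.
have first_row : \sum_(0 <= b < N.+3) in_R N.+2 m s.+2 0 x b y
    = (x <= y) && (s - x - y <= N).
  rewrite (sum_nat_indicator1 _ (c := s.+2 - x - y)) => [|b];
    rewrite /in_R /is_pair xpair_eqE; lia.
have side_columns : \sum_(0 <= a < N.+2)
    (in_R N.+2 m s.+2 a.+1 x 0 y + in_R N.+2 m s.+2 a.+1 x N.+2 y)
    = (x <= y) && (N < s - x - y).
  rewrite big_split /= big1 => [|a _]; last by rewrite /in_R /is_pair; lia.
  rewrite (sum_nat_indicator1 _ (c := s - N - x - y - 1)) => [|a];
    rewrite /in_R /is_pair xpair_eqE; lia.
have interior : \sum_(0 <= a < N.+2) \sum_(0 <= b < N.+1)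
    in_R N.+2 m s.+2 a.+1 x b.+1 y = fiberR N m s x y.
  rewrite big_nat_recr //= [X in _ + X]big1 => [|b _]; last first.
    by rewrite /in_R /is_pair; lia.
  rewrite addn0; apply: eq_big_nat => a _; apply: eq_big_nat => b /andP[_ bN].
  rewrite /in_R /is_pair !xpair_eqE; congr nat_of_bool; lia.
rewrite first_row side_columns interior; case: (x <= y) => /=; lia.
Qed.

Lemma cardR_step N m s : 2 * m <= s.+1 -> s <= 2 * N ->
  cardR N.+2 m s.+2 = cardR N m s + 'C(m.+2, 2).
Proof.
move=> ms sN; rewrite !cardR_fibers -sum_leq_pairs -big_split /=.
apply: eq_big_nat => x /andP[_ xm]; rewrite -big_split /=.
apply: eq_big_nat => y /andP[_ ym]; apply: fiberR_step; lia.
Qed.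

Theorem lemma7p10 (n m : nat) (hm : 2 <= m) (hnm : m <= n) :
  SR (n + 2) m = SR n m + 'C(m + 2, 2) /\
  (~~ odd (n + m) -> DR (n + 2) m = DR n m + 'C(m + 2, 2)).
Proof.
have odd_shift : odd (n + 2 + m) = odd (n + m) by rewrite addnAC addn2 /= negbK.
rewrite /SR /DR odd_shift !addn2 !addSn; split => [|_]; last by apply: cardR_step; lia.
case: ifP => _; first by apply: cardR_step; lia.
rewrite (_ : (n + m).+2 - 1 = (n + m - 1).+2); last by lia.
by apply: cardR_step; lia.
Qed.
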